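(* Let $k=2$, $0<\theta<1/3$ and $\lambda>\frac{9}{4(1-3\theta)}$. Then every family $(z_{1,i},z_{2,i})_{i\in\mathbb{T}^2}$ of positive numbers satisfying, for all $i$, $z_{1,i}=\lambda\prod_{j\in S(i)}F(z_{1,j},z_{2,j},\theta)$ and $z_{2,i}=\lambda\prod_{j\in S(i)}F(z_{2,j},z_{1,j},\theta)$ satisfies $x_1^*\le z_{j,i}\le x_2^*$ for $j=1,2$ and all $i\in\mathbb{T}^2$.
   Context: $\mathbb{T}^2$ is the rooted binary Cayley tree (each vertex has $2$ direct successors; $S(i)$ is the set of direct successors of $i$). $F(x,y,\theta)=\frac{1+x+\theta y}{1+x+y}$. Under the stated conditions, the system $x=\lambda F(x,y,\theta)^2$, $y=\lambda F(y,x,\theta)^2$ has exactly three positive solutions $(x^*,x^* )$, $(x_1^*,x_2^* )$, $(x_2^*,x_1^* )$, where $x_1^*<x_2^*$. *)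

From Stdlib Require Import Reals List.
Open Scope R_scope.

Definition F (x y theta : R) : R := (1 + x + theta * y) / (1 + x + y).

(* The rooted binary Cayley tree T^2: a vertex is the (finite) word of
   left/right choices leading to it from the root (root = nil).
   The direct successors of i are (true :: i) and (false :: i). *)
Definition vertex := list bool.
Definition S (i : vertex) : list vertex := (true :: i) :: (false :: i) :: nil.

Definition prod_succ (f : vertex -> R) (i : vertex) : R :=
  fold_right Rmult 1 (map f (S i)).

(* Starting from the trivial bounds 0 <= z <= lambda and using that F is
   increasing in its first and decreasing in its second argument, induction on
   the tree gives bounds a_n <= z <= b_n valid at every vertex, where
   (a_0, b_0) = (0, lambda) and
   (a_(n+1), b_(n+1)) = (lambda F(a_n, b_n)^2, lambda F(b_n, a_n)^2).
   The a_n increase and the b_n decrease, so their limits (a, b) again solve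
   the system, with a > 0.  Applying the same bounds to the constant solution
   (x1s, x2s) shows a <= x1s < x2s <= b.  Finally a solution with a < b is
   unique: for u = F(a, b), v = F(b, a), the sum u + v is the positive root of
   lambda s^2 - (1 + theta) lambda s - 1 and it determines u^2 + v^2, hence
   u and v.  So (a, b) = (x1s, x2s). *)

From Stdlib Require Import Reals List Lra Psatz.
From Coquelicot Require Import Coquelicot.
Open Scope R_scope.

Section F_properties.

Variable theta : R.
Hypothesis theta_range : 0 <= theta < 1.

Lemma F_gt0 x y : 0 <= x -> 0 <= y -> 0 < F x y theta.
Proof. intros. unfold F. apply Rdiv_lt_0_compat; nra. Qed.

Lemma F_le1 x y : 0 <= x -> 0 <= y -> F x y theta <= 1.
Proof.
  intros. unfold F. apply (Rmult_le_reg_r (1 + x + y)); [lra|].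
  field_simplify; nra.
Qed.

Lemma F_le_compat x y x' y' :
  0 <= x <= x' -> 0 <= y' <= y -> F x y theta <= F x' y' theta.
Proof.
  intros Hx Hy. unfold F.
  apply (Rmult_le_reg_r ((1 + x + y) * (1 + x' + y'))); [nra|].
  field_simplify; try lra.
  assert (0 <= (1 - theta) * ((x' - x) * y + (1 + x) * (y - y'))) by
    (apply Rmult_le_pos; nra).
  nra.
Qed.

End F_properties.

Lemma prod_succ_eq (f : vertex -> R) i :
  prod_succ f i = f (true :: i) * f (false :: i).
Proof. unfold prod_succ; simpl; ring. Qed.

Lemma prod_succ_bounds (f : vertex -> R) lo hi i :
  0 <= lo -> (forall j, lo <= f j <= hi) -> lo ^ 2 <= prod_succ f i <= hi ^ 2.
Proof.
  intros Hlo Hf. rewrite prod_succ_eq.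
  destruct (Hf (true :: i)), (Hf (false :: i)). simpl. split; nra.
Qed.

Lemma positive_root_unique beta lambda s t :
  0 < lambda -> 0 < s -> 0 < t ->
  lambda * s ^ 2 - beta * lambda * s - 1 = 0 ->
  lambda * t ^ 2 - beta * lambda * t - 1 = 0 -> s = t.
Proof.
  intros Hl Hs Ht Es Et.
  assert (Hf : (s - t) * (lambda * (s + t) - beta * lambda) = 0) by nra.
  destruct (Rmult_integral _ _ Hf) as [H | H]; [lra|].
  assert (Hst : lambda * s * t = -1) by nra.
  assert (0 < lambda * s * t)
    by (apply Rmult_lt_0_compat; [apply Rmult_lt_0_compat|]; lra).
  lra.
Qed.

Lemma ordered_pair_eq_of_power_sums u v u' v' :
  u < v -> u' < v' -> u + v = u' + v' -> u ^ 2 + v ^ 2 = u' ^ 2 + v' ^ 2 ->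
  u = u' /\ v = v'.
Proof.
  intros Huv Huv' E1 E2.
  assert (Hp : (u - u') * (u - v') = 0) by nra.
  destruct (Rmult_integral _ _ Hp); lra.
Qed.

Definition Phi (lambda theta x y : R) : R := lambda * F x y theta ^ 2.

Section Phi_properties.

Variables lambda theta : R.
Hypothesis lambda_pos : 0 < lambda.
Hypothesis theta_range : 0 <= theta < 1.

Lemma Phi_gt0 x y : 0 <= x -> 0 <= y -> 0 < Phi lambda theta x y.
Proof.
  intros. unfold Phi. apply Rmult_lt_0_compat; [lra|]. apply pow_lt, F_gt0; lra.
Qed.

Lemma Phi_le_lambda x y : 0 <= x -> 0 <= y -> Phi lambda theta x y <= lambda.
Proof.
  intros. unfold Phi.
  assert (0 < F x y theta) by (apply F_gt0; lra).
  assert (F x y theta <= 1) by (apply F_le1; lra).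
  set (f := F x y theta) in *. assert (f * f <= 1) by nra. simpl. nra.
Qed.

Lemma Phi_le_compat x y x' y' :
  0 <= x <= x' -> 0 <= y' <= y -> Phi lambda theta x y <= Phi lambda theta x' y'.
Proof.
  intros. unfold Phi. apply Rmult_le_compat_l; [lra|].
  apply pow_incr. split; [apply Rlt_le, F_gt0 | apply F_le_compat]; lra.
Qed.

Lemma fixed_point_F_identities a b :
  0 <= a -> 0 <= b -> a <> b ->
  a = Phi lambda theta a b -> b = Phi lambda theta b a ->
  let s := F a b theta + F b a theta in
  lambda * s ^ 2 - (1 + theta) * lambda * s - 1 = 0 /\
  lambda * (F a b theta ^ 2 + F b a theta ^ 2) = (1 - theta) * lambda * s - 1.
Proof.
  intros Ha Hb Hab Ea Eb s. unfold Phi in Ea, Eb.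
  set (u := F a b theta) in *. set (v := F b a theta) in *.
  assert (Eu : u * (1 + a + b) = 1 + a + theta * b) by (unfold u, F; field; lra).
  assert (Ev : v * (1 + a + b) = 1 + b + theta * a) by (unfold v, F; field; lra).
  (* The difference of Eu and Ev is (u - v)(1 + a + b) = (1 - theta) lambda (u^2 - v^2). *)
  assert (Esum : 1 + a + b = (1 - theta) * lambda * s).
  { assert (Huv : u - v <> 0).
    { intro. apply Hab. rewrite Ea, Eb. replace v with u by lra. reflexivity. }
    apply (Rmult_eq_reg_l (u - v)); [| exact Huv].
    transitivity ((1 - theta) * (a - b)); [nra|].
    rewrite Ea, Eb at 1. unfold s. ring. }
  split; [| lra].
  apply (Rmult_eq_reg_l (1 - theta)); [| lra].
  assert (s * (1 + a + b) = 2 + (1 + theta) * (a + b)) by (unfold s; lra).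
  nra.
Qed.

Lemma nonsymmetric_fixed_point_unique a b c d :
  0 <= a < b -> 0 <= c < d ->
  a = Phi lambda theta a b -> b = Phi lambda theta b a ->
  c = Phi lambda theta c d -> d = Phi lambda theta d c -> a = c /\ b = d.
Proof.
  intros Hab Hcd Ea Eb Ec Ed.
  destruct (fixed_point_F_identities a b) as [Sab Qab]; try lra.
  destruct (fixed_point_F_identities c d) as [Scd Qcd]; try lra.
  unfold Phi in Ea, Eb, Ec, Ed.
  set (u := F a b theta) in *. set (v := F b a theta) in *.
  set (u' := F c d theta) in *. set (v' := F d c theta) in *.
  assert (Hu : 0 < u) by (apply F_gt0; lra).
  assert (Hv : 0 < v) by (apply F_gt0; lra).
  assert (Hu' : 0 < u') by (apply F_gt0; lra).
  assert (Hv' : 0 < v') by (apply F_gt0; lra).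
  assert (Hsum : u + v = u' + v')
    by (apply (positive_root_unique (1 + theta) lambda); lra).
  assert (Hsq : u ^ 2 + v ^ 2 = u' ^ 2 + v' ^ 2).
  { apply (Rmult_eq_reg_l lambda); [| lra]. rewrite Qab, Qcd, Hsum. ring. }
  assert (Huv : u < v) by nra.
  assert (Huv' : u' < v') by nra.
  destruct (ordered_pair_eq_of_power_sums u v u' v' Huv Huv' Hsum Hsq) as [-> ->].
  split; congruence.
Qed.

End Phi_properties.

Lemma is_lim_seq_le_const (u : nat -> R) (l c : R) :
  is_lim_seq u l -> (forall n, u n <= c) -> l <= c.
Proof.
  intros Hu Hc. exact (is_lim_seq_le u (fun _ => c) l c Hc Hu (is_lim_seq_const c)).
Qed.

Lemma is_lim_seq_ge_const (u : nat -> R) (l c : R) :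
  is_lim_seq u l -> (forall n, c <= u n) -> c <= l.
Proof.
  intros Hu Hc. exact (is_lim_seq_le (fun _ => c) u c l Hc (is_lim_seq_const c) Hu).
Qed.

Lemma is_lim_seq_F theta (u v : nat -> R) l m :
  0 <= l -> 0 <= m -> is_lim_seq u l -> is_lim_seq v m ->
  is_lim_seq (fun n => F (u n) (v n) theta) (F l m theta).
Proof.
  intros Hl Hm Hu Hv. unfold F.
  apply is_lim_seq_div'; [| | lra].
  - apply is_lim_seq_plus'; [apply is_lim_seq_plus' | apply is_lim_seq_mult'];
      auto using is_lim_seq_const.
  - apply is_lim_seq_plus'; [apply is_lim_seq_plus'|]; auto using is_lim_seq_const.
Qed.

Lemma is_lim_seq_Phi lambda theta (u v : nat -> R) l m :
  0 <= l -> 0 <= m -> is_lim_seq u l -> is_lim_seq v m ->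
  is_lim_seq (fun n => Phi lambda theta (u n) (v n)) (Phi lambda theta l m).
Proof.
  intros Hl Hm Hu Hv.
  assert (HF := is_lim_seq_F theta u v l m Hl Hm Hu Hv).
  apply (is_lim_seq_ext
           (fun n => lambda * (F (u n) (v n) theta * F (u n) (v n) theta))).
  { intro n. unfold Phi. ring. }
  replace (Phi lambda theta l m) with (lambda * (F l m theta * F l m theta))
    by (unfold Phi; ring).
  apply is_lim_seq_mult'; [apply is_lim_seq_const | now apply is_lim_seq_mult'].
Qed.

Lemma fixed_point_of_is_lim_seq lambda theta (u v : nat -> R) l m :
  0 <= l -> 0 <= m -> is_lim_seq u l -> is_lim_seq v m ->
  (forall n, u (Datatypes.S n) = Phi lambda theta (u n) (v n)) ->
  l = Phi lambda theta l m.
Proof.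
  intros Hl Hm Hu Hv Hrec.
  assert (Hshift : is_lim_seq (fun n => Phi lambda theta (u n) (v n)) l).
  { apply (is_lim_seq_ext (fun n => u (Datatypes.S n))); [exact Hrec|].
    now apply is_lim_seq_incr_1 in Hu. }
  assert (E := is_lim_seq_unique _ _ Hshift).
  rewrite (is_lim_seq_unique _ _ (is_lim_seq_Phi lambda theta u v l m Hl Hm Hu Hv)) in E.
  now injection E.
Qed.

Section Bounds.

Variables lambda theta : R.
Hypothesis lambda_pos : 0 < lambda.
Hypothesis theta_range : 0 <= theta < 1.

Definition bound_step (p : R * R) : R * R :=
  (Phi lambda theta (fst p) (snd p), Phi lambda theta (snd p) (fst p)).

Definition lower (n : nat) : R := fst (Nat.iter n bound_step (0, lambda)).
Definition upper (n : nat) : R := snd (Nat.iter n bound_step (0, lambda)).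

Lemma lower_succ n : lower (Datatypes.S n) = Phi lambda theta (lower n) (upper n).
Proof. reflexivity. Qed.

Lemma upper_succ n : upper (Datatypes.S n) = Phi lambda theta (upper n) (lower n).
Proof. reflexivity. Qed.

Lemma bounds_range n : 0 <= lower n <= lambda /\ 0 <= upper n <= lambda.
Proof.
  induction n as [| n IH].
  - cbn. lra.
  - rewrite lower_succ, upper_succ.
    assert (Phi lambda theta (lower n) (upper n) <= lambda) by (apply Phi_le_lambda; lra).
    assert (Phi lambda theta (upper n) (lower n) <= lambda) by (apply Phi_le_lambda; lra).
    assert (0 < Phi lambda theta (lower n) (upper n)) by (apply Phi_gt0; lra).
    assert (0 < Phi lambda theta (upper n) (lower n)) by (apply Phi_gt0; lra).
    lra.
Qed.

Lemma bounds_monotone n :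
  lower n <= lower (Datatypes.S n) /\ upper (Datatypes.S n) <= upper n.
Proof.
  induction n as [| n IH].
  - destruct (bounds_range 1) as [H1 H2]. split; [apply H1 | apply H2].
  - destruct (bounds_range n), (bounds_range (Datatypes.S n)).
    split.
    + apply (Phi_le_compat lambda theta lambda_pos theta_range (lower n) (upper n)
               (lower (Datatypes.S n)) (upper (Datatypes.S n))); lra.
    + apply (Phi_le_compat lambda theta lambda_pos theta_range
               (upper (Datatypes.S n)) (lower (Datatypes.S n)) (upper n) (lower n)); lra.
Qed.

Definition lower_lim : R := real (Lim_seq lower).
Definition upper_lim : R := real (Lim_seq upper).

Lemma is_lim_seq_lower : is_lim_seq lower lower_lim.
Proof.
  destruct (ex_finite_lim_seq_incr lower lambda) as [l Hl].
  - intro n. apply bounds_monotone.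
  - intro n. apply bounds_range.
  - unfold lower_lim. now rewrite (is_lim_seq_unique _ _ Hl).
Qed.

Lemma is_lim_seq_upper : is_lim_seq upper upper_lim.
Proof.
  destruct (ex_finite_lim_seq_decr upper 0) as [l Hl].
  - intro n. apply bounds_monotone.
  - intro n. apply bounds_range.
  - unfold upper_lim. now rewrite (is_lim_seq_unique _ _ Hl).
Qed.

Lemma bound_lims_nonneg : 0 <= lower_lim /\ 0 <= upper_lim.
Proof.
  split.
  - apply (is_lim_seq_ge_const lower); [exact is_lim_seq_lower | apply bounds_range].
  - apply (is_lim_seq_ge_const upper); [exact is_lim_seq_upper | apply bounds_range].
Qed.

Lemma bound_lims_fixed_point :
  lower_lim = Phi lambda theta lower_lim upper_lim /\
  upper_lim = Phi lambda theta upper_lim lower_lim.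
Proof.
  destruct bound_lims_nonneg.
  split; eapply fixed_point_of_is_lim_seq;
    eauto using is_lim_seq_lower, is_lim_seq_upper, lower_succ, upper_succ.
Qed.

Lemma lower_lim_gt0 : 0 < lower_lim.
Proof.
  destruct bound_lims_nonneg.
  rewrite (proj1 bound_lims_fixed_point). apply Phi_gt0; lra.
Qed.

Section Tree_solution.

Variables z1 z2 : vertex -> R.
Hypothesis z1_nonneg : forall i, 0 <= z1 i.
Hypothesis z2_nonneg : forall i, 0 <= z2 i.
Hypothesis z1_eq :
  forall i, z1 i = lambda * prod_succ (fun j => F (z1 j) (z2 j) theta) i.
Hypothesis z2_eq :
  forall i, z2 i = lambda * prod_succ (fun j => F (z2 j) (z1 j) theta) i.

Lemma tree_solution_step lo hi :
  0 <= lo -> (forall j, lo <= z1 j <= hi /\ lo <= z2 j <= hi) ->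
  forall i, Phi lambda theta lo hi <= z1 i <= Phi lambda theta hi lo /\
            Phi lambda theta lo hi <= z2 i <= Phi lambda theta hi lo.
Proof.
  intros Hlo Hz i.
  assert (Hhi : lo <= hi) by (destruct (Hz nil) as [[] _]; lra).
  assert (HF : forall x y, lo <= x <= hi -> lo <= y <= hi ->
            F lo hi theta <= F x y theta <= F hi lo theta)
    by (intros; split; apply F_le_compat; lra).
  assert (Hlo' : 0 <= F lo hi theta) by (apply Rlt_le, F_gt0; lra).
  destruct (prod_succ_bounds (fun j => F (z1 j) (z2 j) theta)
              (F lo hi theta) (F hi lo theta) i Hlo') as [A1 A2].
  { intro j. destruct (Hz j). now apply HF. }
  destruct (prod_succ_bounds (fun j => F (z2 j) (z1 j) theta)
              (F lo hi theta) (F hi lo theta) i Hlo') as [B1 B2].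
  { intro j. destruct (Hz j). now apply HF. }
  unfold Phi. rewrite z1_eq, z2_eq.
  repeat split; apply Rmult_le_compat_l; lra.
Qed.

Lemma tree_solution_between_bounds n i :
  lower n <= z1 i <= upper n /\ lower n <= z2 i <= upper n.
Proof.
  revert i. induction n as [| n IH]; intro i.
  - assert (Hle : forall x y, 0 <= x -> 0 <= y -> 0 <= F x y theta <= 1)
      by (intros; split; [apply Rlt_le, F_gt0 | apply F_le1]; lra).
    destruct (prod_succ_bounds (fun j => F (z1 j) (z2 j) theta) 0 1 i) as [_ A];
      [lra | intro j; apply Hle; auto |].
    destruct (prod_succ_bounds (fun j => F (z2 j) (z1 j) theta) 0 1 i) as [_ B];
      [lra | intro j; apply Hle; auto |].
    rewrite pow1 in A, B. change (0 <= z1 i <= lambda /\ 0 <= z2 i <= lambda).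
    pose proof (z1_eq i). pose proof (z2_eq i).
    pose proof (z1_nonneg i). pose proof (z2_nonneg i). nra.
  - rewrite lower_succ, upper_succ. apply tree_solution_step; auto.
    apply bounds_range.
Qed.

Lemma tree_solution_between_lims i :
  lower_lim <= z1 i <= upper_lim /\ lower_lim <= z2 i <= upper_lim.
Proof.
  pose proof is_lim_seq_lower. pose proof is_lim_seq_upper.
  repeat split;
    [eapply is_lim_seq_le_const | eapply is_lim_seq_ge_const
    | eapply is_lim_seq_le_const | eapply is_lim_seq_ge_const];
    eauto; intro n; apply (tree_solution_between_bounds n i).
Qed.

End Tree_solution.

Lemma fixed_point_between_lims a b :
  0 <= a -> 0 <= b -> a = Phi lambda theta a b -> b = Phi lambda theta b a ->
  lower_lim <= a <= upper_lim /\ lower_lim <= b <= upper_lim.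
Proof.
  intros Ha Hb Ea Eb.
  assert (Hconst : forall x y i, x = Phi lambda theta x y ->
            x = lambda * prod_succ (fun _ => F x y theta) i)
    by (intros x y i E; rewrite prod_succ_eq, E at 1; unfold Phi; ring).
  exact (tree_solution_between_lims (fun _ => a) (fun _ => b) (fun _ => Ha) (fun _ => Hb)
           (fun i => Hconst a b i Ea) (fun i => Hconst b a i Eb) nil).
Qed.

End Bounds.

Theorem mainTheorem16 (theta lambda x1s x2s : R) (z1 z2 : vertex -> R) :
  0 < theta -> theta < 1/3 ->
  lambda > 9 / (4 * (1 - 3 * theta)) ->
  0 < x1s -> x1s < x2s ->
  x1s = lambda * (F x1s x2s theta) ^ 2 ->
  x2s = lambda * (F x2s x1s theta) ^ 2 ->
  (forall i, 0 < z1 i) -> (forall i, 0 < z2 i) ->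
  (forall i, z1 i = lambda * prod_succ (fun j => F (z1 j) (z2 j) theta) i) ->
  (forall i, z2 i = lambda * prod_succ (fun j => F (z2 j) (z1 j) theta) i) ->
  forall i, x1s <= z1 i <= x2s /\ x1s <= z2 i <= x2s.
Proof.
  intros Htheta0 Htheta1 Hlambda Hx1 Hx12 Ex1 Ex2 Hz1 Hz2 Ez1 Ez2.
  assert (Ht : 0 <= theta < 1) by lra.
  (* The bound on lambda only ensures that (x1s, x2s) exists; here it gives lambda > 0. *)
  assert (Hl : 0 < lambda).
  { assert (0 < 9 / (4 * (1 - 3 * theta))) by (apply Rdiv_lt_0_compat; lra). lra. }
  destruct (fixed_point_between_lims lambda theta Hl Ht x1s x2s)
    as [[Hlo _] [_ Hhi]]; [lra | lra | exact Ex1 | exact Ex2 |].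
  destruct (bound_lims_fixed_point lambda theta Hl Ht) as [Elo Ehi].
  pose proof (lower_lim_gt0 lambda theta Hl Ht).
  set (lo := lower_lim lambda theta) in *. set (hi := upper_lim lambda theta) in *.
  destruct (nonsymmetric_fixed_point_unique lambda theta Hl Ht lo hi x1s x2s)
    as [<- <-]; [lra | lra | exact Elo | exact Ehi | exact Ex1 | exact Ex2 |].
  intro i.
  apply tree_solution_between_lims; auto using Rlt_le.
Qed.
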